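(* Let $P(t)=\binom{r+t}{r}-\binom{r+t-d}{r}$. For every integer $D\ge 0$, every indivisible one-parameter subgroup $\lambda\in\Gamma(T)$ and every real $\delta>0$, $$E_{d+D,[\lambda],|M_D|\,\delta}=E_{d,[\lambda],\delta}$$ as subsets of $\mathrm{Hilb}^P(\mathbb{P}^r_k)$. Consequently, for all integers $t\ge d$ the Hesselink stratifications $\mathrm{Hilb}^P(\mathbb{P}^r_k)^{us}_t=\coprod_{[\lambda],\delta>0}E_{t,[\lambda],\delta}$ coincide (up to the rescaling $\delta\mapsto |M_{t-d}|\delta$ of the index $\delta$), and in particular $\mathrm{Hilb}^P(\mathbb{P}^r_k)^{us}_{d+D}=\mathrm{Hilb}^P(\mathbb{P}^r_k)^{us}_{d}$ as sets for every $D\ge 0$.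
   Context: Let $k$ be an algebraically closed field, $r\ge1$, $d\ge1$ integers, $S=k[x_0,\dots,x_r]$ graded by degree, $S_t$ its degree-$t$ part, and $M_t$ the set of monomials of degree $t$ (so $|M_t|=\binom{r+t}{r}$). Let $P(t)=\binom{r+t}{r}-\binom{r+t-d}{r}$; then $\mathrm{Hilb}^P(\mathbb{P}^r_k)$ parametrizes hypersurfaces of degree $d$: a closed point $x$ corresponds to $H_x=V(f)$ with $0\ne f\in S_d$ unique up to scalar. For $t\ge d$ put $Q(t)=\dim S_t-P(t)=|M_{t-d}|$ and let $\phi_t:\mathrm{Hilb}^P(\mathbb{P}^r_k)\to\mathbb{P}(\bigwedge^{Q(t)}S_t)$ send $x$ to the Plücker point $[\bigwedge^{Q(t)}(f\cdot S_{t-d})]$ of the degree-$t$ part of the ideal $(f)$ (the $t$-th Hilbert point). $G=\mathrm{GL}_{r+1}(k)$ acts on $S_1=\mathrm{span}(x_0,\dots,x_r)$ by the standard representation, hence on $S$, on the Hilbert scheme ($g.x$ corresponds to $g.f$) and on $\mathbb{P}(\bigwedge^{Q(t)}S_t)$, compatibly with $\phi_t$. Let $H=\mathrm{SL}_{r+1}(k)$, $T_0\subset G$ the diagonal torus, $T=T_0\cap H$. Identify $\Gamma(T_0)\cong\mathbb{Z}^{r+1}$: $\lambda=(a_0,\dots,a_r)$ means $\lambda(s)=\mathrm{diag}(s^{a_0},\dots,s^{a_r})$; then $\lambda(s)$ multiplies the monomial $x_0^{e_0}\cdots x_r^{e_r}$ by $s^{\sum a_ie_i}$, and $\Gamma(T)$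 consists of those $\lambda$ with $\sum a_i=0$. Fix a conjugation-invariant norm $\Vert\cdot\Vert$ on the set $\Gamma(G)$ of one-parameter subgroups which equals the Euclidean norm $\sqrt{\sum a_i^2}$ on $\Gamma(T_0)$. A one-parameter subgroup is indivisible if it is not $n\mu$ for an integer $n\ge2$ and a one-parameter subgroup $\mu$. For a $G$-representation $V$, $0\ne v\in V$ and $\lambda\in\Gamma(G)$, write $v=\sum_i v_i$ with $\lambda(s)v_i=s^iv_i$ and set $\mu(v,\lambda)=\min\{i: v_i\neq 0\}$ (well defined on projective points). For $t\ge d$ let $\Lambda_{x,t}$ be the (nonempty) set of indivisible $\lambda\in\Gamma(H)$ maximizing $\mu(\phi_t(x),\lambda)/\Vert\lambda\Vert$; $x$ is unstable at level $t$ if this maximum is $>0$, and $\mathrm{Hilb}^P(\mathbb{P}^r_k)^{us}_t$ is the set of such $x$. For an indivisible $\lambda\in\Gamma(T)$ and $\delta>0$, $E_{t,[\lambda],\delta}$ is the set of $x$ such that $\Lambda_{x,t}$ meets the $G$-conjugacy class $[\lambda]$ of $\lambda$ and the maximum value of $\mu(\phi_t(x),\cdot)/\Vert\cdot\Vert$ equals $\delta$ (Hesselink strata). *)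

From HB Require Import structures.
From Stdlib Require Import Reals ClassicalEpsilon.
From mathcomp Require Import all_boot all_order all_algebra.

Set Implicit Arguments.
Unset Strict Implicit.
Unset Printing Implicit Defensive.

Import GRing.Theory.
Local Open Scope ring_scope.

Definition mono (r t : nat) :=
  {e : {ffun 'I_r.+1 -> 'I_t.+1} | (\sum_(i < r.+1) (e i : nat))%N == t}.

Definition mono_eval (k : fieldType) (r t : nat) (e : mono r t) (v : 'rV[k]_r.+1) : k :=
  \prod_(i < r.+1) (v ord0 i) ^+ (val e i : nat).

Definition hform (k : fieldType) (r t : nat) := {ffun mono r t -> k}.

Definition feval (k : fieldType) (r t : nat) (F : hform k r t) (v : 'rV[k]_r.+1) : k :=
  \sum_(e : mono r t) F e * mono_eval e v.

(* coefficients in the monomial basis M_t of a homogeneous polynomial function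
   of degree t (unique since k is infinite) *)
Definition coeffs (k : fieldType) (r t : nat) (Fn : 'rV[k]_r.+1 -> k) : hform k r t :=
  epsilon (inhabits [ffun _ => 0]) (fun c : hform k r t => forall v, Fn v = feval c v).

(* One-parameter subgroups of G = GL_{r+1}(k): morphisms of algebraic groups
   G_m -> GL_{r+1}, given by their values at the points s <> 0 of G_m (the value
   at s = 0 is irrelevant): entries are Laurent polynomials in s, values are
   invertible, and lambda is a group homomorphism. *)
Definition is_ops (k : fieldType) (r : nat) (l : k -> 'M[k]_r.+1) : Prop :=
  (exists N : nat, exists P : 'M[{poly k}]_r.+1,
      forall s, s != 0 -> l s = s ^- N *: map_mx (fun p => p.[s]) P)
  /\ (forall s, s != 0 -> l s \in unitmx)
  /\ (forall s t, s != 0 -> t != 0 -> l (s * t) = l s *m l t).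

Definition is_ops_SL (k : fieldType) (r : nat) (l : k -> 'M[k]_r.+1) : Prop :=
  is_ops l /\ (forall s, s != 0 -> \det (l s) = 1).

Definition indivisible (k : fieldType) (r : nat) (l : k -> 'M[k]_r.+1) : Prop :=
  ~ (exists n : nat, (2 <= n)%N /\
       exists m : k -> 'M[k]_r.+1, is_ops m /\ forall s, s != 0 -> l s = (m s) ^+ n).

Definition conj_ops (k : fieldType) (r : nat) (l l' : k -> 'M[k]_r.+1) : Prop :=
  exists g : 'M[k]_r.+1, g \in unitmx /\
    forall s, s != 0 -> l' s = g *m l s *m invmx g.

Definition diag_ops (k : fieldType) (r : nat) (a : 'I_r.+1 -> int) : k -> 'M[k]_r.+1 :=
  fun s => diag_mx (\row_i (s ^ a i)).

(* The action of g on S: g.x_j = sum_i g_ij x_i, i.e. (g.F)(v) = F(v *m g).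
   Entry (m, e): coefficient of the monomial e in lambda(s).(f * m),
   for m in M_{t-d}, e in M_t. *)
Definition hilb_entry (k : fieldType) (r d t : nat) (f : hform k r d)
    (l : k -> 'M[k]_r.+1) (s : k) (m : mono r (t - d)) (e : mono r t) : k :=
  coeffs t (fun v => feval f (v *m l s) * mono_eval m (v *m l s)) e.

Definition Qdim (r d t : nat) : nat := #|{: mono r (t - d)}|.

(* Plucker coordinates (up to sign, with repetitions and zeros) of
   lambda(s) . /\^{Q(t)} (f S_{t-d}), Q(t) = |M_{t-d}|, in the monomial basis. *)
Definition plucker (k : fieldType) (r d t : nat) (f : hform k r d)
    (l : k -> 'M[k]_r.+1) (s : k) (b : 'I_(Qdim r d t) -> mono r t) : k :=
  \det (\matrix_(i, j) hilb_entry f l s (enum_val i) (b j)).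

Definition ord_ge (k : fieldType) (r d t : nat) (f : hform k r d)
    (l : k -> 'M[k]_r.+1) (i : int) : Prop :=
  forall b : 'I_(Qdim r d t) -> mono r t,
    exists p : {poly k}, forall s, s != 0 -> plucker f l s b = s ^ i * p.[s].

Definition mu_is (k : fieldType) (r d t : nat) (f : hform k r d)
    (l : k -> 'M[k]_r.+1) (i : int) : Prop :=
  ord_ge t f l i /\ ~ ord_ge t f l (i + 1).

Definition intR (z : int) : R :=
  match z with Posz n => INR n | Negz n => Ropp (INR n.+1) end.

Definition admissible_norm (k : fieldType) (r : nat)
    (nrm : (k -> 'M[k]_r.+1) -> R) : Prop :=
  (forall l l', is_ops l -> (forall s, s != 0 -> l s = l' s) -> nrm l = nrm l')
  /\ (forall l g, is_ops l -> g \in unitmx ->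
        nrm (fun s => g *m l s *m invmx g) = nrm l)
  /\ (forall a : 'I_r.+1 -> int,
        nrm (diag_ops a) = sqrt (\big[Rplus/R0]_(i < r.+1) Rsqr (intR (a i)))).

Definition ratio_is (k : fieldType) (r d : nat) (nrm : (k -> 'M[k]_r.+1) -> R)
    (t : nat) (f : hform k r d) (l : k -> 'M[k]_r.+1) (x : R) : Prop :=
  exists i : int, mu_is t f l i /\ x = Rdiv (intR i) (nrm l).

Definition max_value (k : fieldType) (r d : nat) (nrm : (k -> 'M[k]_r.+1) -> R)
    (t : nat) (f : hform k r d) (delta : R) : Prop :=
  (exists l, is_ops_SL l /\ indivisible l /\ ratio_is nrm t f l delta)
  /\ (forall l x, is_ops_SL l -> indivisible l -> ratio_is nrm t f l x -> Rle x delta).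

Definition stratum (k : fieldType) (r d : nat) (nrm : (k -> 'M[k]_r.+1) -> R)
    (t : nat) (l0 : k -> 'M[k]_r.+1) (delta : R) (f : hform k r d) : Prop :=
  (exists l, is_ops_SL l /\ indivisible l /\ conj_ops l0 l /\ ratio_is nrm t f l delta)
  /\ (forall l x, is_ops_SL l -> indivisible l -> ratio_is nrm t f l x -> Rle x delta).

Definition unstable (k : fieldType) (r d : nat) (nrm : (k -> 'M[k]_r.+1) -> R)
    (t : nat) (f : hform k r d) : Prop :=
  exists delta, Rlt R0 delta /\ max_value nrm t f delta.

(* For a one-parameter subgroup lambda of SL_{r+1}, the Pluecker coordinates
   of lambda(s).phi_t([f]) are the maximal minors of the matrix of
   F |-> (lambda(s).f) * (lambda(s).F) from S_{t-d} to S_t.  This matrix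
   factors as Sym^{t-d} lambda(s), whose determinant is a nonzero constant
   because det lambda(s) = 1, times the matrix of multiplication by
   lambda(s).f.  Write lambda(s).f = s^i (f0 + s g(s)) with f0 <> 0, i the
   lowest weight mu(phi_d([f]), lambda).  Every Q x Q minor (Q = |M_{t-d}|)
   is then divisible by s^(i Q), and as S is a domain, multiplication by f0
   is injective on S_{t-d}, so some minor has a nonzero constant term after
   dividing by s^(i Q).  Hence mu(phi_t([f]), lambda) = Q mu(phi_d([f]), lambda)
   for every lambda, which rescales the maximal ratio, the maximizing
   subgroups and the instability by the same factor Q. *)

From Stdlib Require Import Reals ClassicalEpsilon Classical.
From mathcomp Require Import all_boot all_order all_algebra fingroup perm zify.

Set Implicit Arguments.
Unset Strict Implicit.
Unset Printing Implicit Defensive.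
Import GRing.Theory Order.TTheory Num.Theory.
Local Open Scope ring_scope.

(** * Forms and their coefficients *)

Section Monomials.
Variable r : nat.

Lemma mono_sum t (e : mono r t) : (\sum_i (val e i : nat))%N = t.
Proof. exact: eqP (valP e). Qed.

Lemma eq_mono t (e e' : mono r t) : (forall i, (val e i : nat) = val e' i) -> e = e'.
Proof. by move=> eq_e; apply/val_inj/ffunP => i; apply/val_inj/eq_e. Qed.

Lemma leq_sum_ord (n : 'I_r.+1 -> nat) i : (n i <= \sum_j n j)%N.
Proof. by rewrite (bigD1 i) //= leq_addr. Qed.

Lemma mono_of_subproof t (n : 'I_r.+1 -> nat) : (\sum_i n i)%N = t ->
  (\sum_(i < r.+1) (([ffun i => inord (n i)] : {ffun 'I_r.+1 -> 'I_t.+1}) i : nat))%N == t.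
Proof.
move=> sum_n; apply/eqP; rewrite -[RHS]sum_n; apply: eq_bigr => i _.
by rewrite ffunE inordK // ltnS -sum_n leq_sum_ord.
Qed.

Definition mono_of t (n : 'I_r.+1 -> nat) (sum_n : (\sum_i n i)%N = t) : mono r t :=
  exist _ [ffun i => inord (n i)] (mono_of_subproof sum_n).

Lemma mono_ofE t n (sum_n : (\sum_i n i)%N = t) i : (val (mono_of sum_n) i : nat) = n i.
Proof. by rewrite /= ffunE inordK // ltnS -sum_n leq_sum_ord. Qed.

Lemma card_mono_gt0 t : (0 < #|{: mono r t}|)%N.
Proof.
have sum_t : (\sum_(i < r.+1) (if i == ord0 then t else 0%N))%N = t.
  by rewrite (bigD1 ord0) //= big1 ?addn0 // => i /negbTE ->.
by apply/card_gt0P; exists (mono_of sum_t).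
Qed.

Lemma card_mono0 : #|{: mono r 0}| = 1%N.
Proof.
have sum0 : (\sum_(i < r.+1) 0)%N = 0%N by rewrite big1.
apply: (@eq_card1 _ (mono_of sum0)) => e; rewrite !inE; apply/esym/eqP/eq_mono => i.
by rewrite mono_ofE; apply/eqP; rewrite -leqn0 -ltnS.
Qed.

(* [mono_ev] and [form_ev] are [mono_eval] and [feval] over an arbitrary
   commutative ring: forms get evaluated at matrices of polynomials. *)
Variable R : comNzRingType.

Definition mono_ev t (e : mono r t) (v : 'rV[R]_r.+1) : R :=
  \prod_(i < r.+1) (v ord0 i) ^+ (val e i : nat).

Definition form_ev t (c : {ffun mono r t -> R}) (v : 'rV[R]_r.+1) : R :=
  \sum_(e : mono r t) c e * mono_ev e v.

Definition formfun t (phi : 'rV[R]_r.+1 -> R) :=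
  exists c : {ffun mono r t -> R}, forall v, phi v = form_ev c v.

Lemma eq_formfun t phi psi : (forall v, phi v = psi v) -> formfun t phi -> formfun t psi.
Proof. by move=> eq_phi [c Hc]; exists c => v; rewrite -eq_phi. Qed.

Lemma form_ev0 t v : form_ev (0 : {ffun mono r t -> R}) v = 0.
Proof. by rewrite /form_ev big1 // => e _; rewrite ffunE mul0r. Qed.

Lemma formfun0 t : formfun t (fun _ => 0).
Proof. by exists 0 => v; rewrite form_ev0. Qed.

Lemma formfunD t phi psi :
  formfun t phi -> formfun t psi -> formfun t (fun v => phi v + psi v).
Proof.
move=> [c Hc] [c' Hc']; exists [ffun e => c e + c' e] => v.
by rewrite Hc Hc' /form_ev -big_split; apply: eq_bigr => e _; rewrite ffunE mulrDl.
Qed.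

Lemma formfunZ t a phi : formfun t phi -> formfun t (fun v => a * phi v).
Proof.
move=> [c Hc]; exists [ffun e => a * c e] => v.
by rewrite Hc /form_ev mulr_sumr; apply: eq_bigr => e _; rewrite ffunE mulrA.
Qed.

Lemma formfun_sum t (I : Type) (s : seq I) (P : pred I) (F : I -> 'rV[R]_r.+1 -> R) :
  (forall i, P i -> formfun t (F i)) -> formfun t (fun v => \sum_(i <- s | P i) F i v).
Proof.
move=> FP; elim: s => [|x s IHs].
  by apply: eq_formfun (formfun0 t) => v; rewrite big_nil.
have [Px|nPx] := boolP (P x).
  by apply: eq_formfun (formfunD (FP x Px) IHs) => v; rewrite big_cons Px.
by apply: eq_formfun IHs => v; rewrite big_cons (negbTE nPx).
Qed.

Lemma formfun_monomial t (n : 'I_r.+1 -> nat) : (\sum_i n i)%N = t ->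
  formfun t (fun v => \prod_i v ord0 i ^+ n i).
Proof.
move=> sum_n; exists [ffun e => (e == mono_of sum_n)%:R] => v.
rewrite /form_ev (bigD1 (mono_of sum_n)) //= ffunE eqxx mul1r [X in _ + X]big1 ?addr0.
  by rewrite /mono_ev; apply: eq_bigr => i _; rewrite mono_ofE.
by move=> e /negbTE ne; rewrite ffunE ne mul0r.
Qed.

Lemma mono_evM a b (e : mono r a) (e' : mono r b) v :
  mono_ev e v * mono_ev e' v = \prod_i v ord0 i ^+ (val e i + val e' i)%N.
Proof. by rewrite -big_split; apply: eq_bigr => i _; rewrite exprD. Qed.

Lemma formfunM a b phi psi :
  formfun a phi -> formfun b psi -> formfun (a + b) (fun v => phi v * psi v).
Proof.
move=> [c Hc] [c' Hc'].
apply: (@eq_formfun _ (fun v => \sum_(e : mono r a) \sum_(e' : mono r b)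
   c e * c' e' * \prod_i v ord0 i ^+ (val e i + val e' i)%N)).
  move=> v; rewrite Hc Hc' /form_ev mulr_suml; apply: eq_bigr => e _.
  by rewrite mulr_sumr; apply: eq_bigr => e' _; rewrite -mono_evM mulrACA.
apply: formfun_sum => e _; apply: formfun_sum => e' _; apply: formfunZ.
by apply: formfun_monomial; rewrite big_split /= !mono_sum.
Qed.

Lemma formfunX t m phi : formfun t phi -> formfun (t * m) (fun v => phi v ^+ m).
Proof.
move=> phi_t; elim: m => [|m IHm].
  rewrite muln0; apply: eq_formfun (formfun_monomial (n := fun=> 0%N) _) => [v|].
    by rewrite big1 ?expr0.
  by rewrite big1.
by rewrite mulnS; apply: eq_formfun (formfunM phi_t IHm) => v; rewrite exprS.
Qed.

Lemma formfun_linear (a : 'I_r.+1 -> R) : formfun 1 (fun v => \sum_j v ord0 j * a j).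
Proof.
apply: formfun_sum => j _.
apply: (@eq_formfun _ (fun v => a j * \prod_i v ord0 i ^+ (i == j))).
  move=> v; rewrite (bigD1 j) //= eqxx expr1 big1 ?mulr1 1?mulrC // => i /negbTE ->.
  by rewrite expr0.
apply/formfunZ/formfun_monomial; rewrite (bigD1 j) //= eqxx big1 // => i /negbTE ->.
by [].
Qed.

Lemma formfun_mono_mul t (e : mono r t) (A : 'M[R]_r.+1) :
  formfun t (fun v => mono_ev e (v *m A)).
Proof.
suff /(_ (index_enum 'I_r.+1)) : forall s : seq 'I_r.+1,
    formfun (\sum_(i <- s) (val e i : nat))%N
      (fun v => \prod_(i <- s) (v *m A) ord0 i ^+ (val e i : nat)).
  by rewrite mono_sum.
elim=> [|x s IHs].
  by rewrite big_nil; apply: eq_formfun (formfun_monomial (n := fun=> 0%N) _) => [v|];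
    rewrite ?big_nil big1.
have Ax : formfun (1 * val e x) (fun v => (v *m A) ord0 x ^+ (val e x : nat)).
  by apply/formfunX/(eq_formfun _ (formfun_linear (fun j => A j x))) => v; rewrite mxE.
by rewrite big_cons -[val e x : nat]mul1n; apply: eq_formfun (formfunM Ax IHs) => v;
  rewrite big_cons.
Qed.

Lemma formfun_form_mul t (c : {ffun mono r t -> R}) (A : 'M[R]_r.+1) :
  formfun t (fun v => form_ev c (v *m A)).
Proof. by apply: formfun_sum => e _; apply/formfunZ/formfun_mono_mul. Qed.

Lemma mono_evZ t (e : mono r t) a v : mono_ev e (a *: v) = a ^+ t * mono_ev e v.
Proof.
rewrite /mono_ev -[in a ^+ t](mono_sum e) -prodrXr -big_split /=.
by apply: eq_bigr => i _; rewrite mxE exprMn.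
Qed.

Lemma form_evZ t (c : {ffun mono r t -> R}) a v : form_ev c (a *: v) = a ^+ t * form_ev c v.
Proof. by rewrite /form_ev mulr_sumr; apply: eq_bigr => e _; rewrite mono_evZ mulrCA. Qed.

Lemma form_ev_sum t (I : finType) (a : I -> R) (c : I -> {ffun mono r t -> R}) v :
  form_ev [ffun e => \sum_i a i * c i e] v = \sum_i a i * form_ev (c i) v.
Proof.
rewrite /form_ev; under eq_bigr do rewrite ffunE mulr_suml.
rewrite exchange_big /=; apply: eq_bigr => i _; rewrite mulr_sumr.
by apply: eq_bigr => e _; rewrite mulrA.
Qed.

End Monomials.

Lemma mono_ev_rmorph r (R S : comNzRingType) (phi : {rmorphism R -> S}) t (e : mono r t) v :
  phi (mono_ev e v) = mono_ev e (map_mx phi v).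
Proof. by rewrite rmorph_prod; apply: eq_bigr => i _; rewrite rmorphXn mxE. Qed.

Lemma form_ev_rmorph r (R S : comNzRingType) (phi : {rmorphism R -> S}) t
    (c : {ffun mono r t -> R}) v :
  phi (form_ev c v) = form_ev [ffun e => phi (c e)] (map_mx phi v).
Proof.
rewrite rmorph_sum; apply: eq_bigr => e _.
by rewrite rmorphM mono_ev_rmorph ffunE.
Qed.

Lemma fevalE (k : fieldType) r t (c : hform k r t) v : feval c v = form_ev c v.
Proof. by []. Qed.

Lemma mono_evalE (k : fieldType) r t (e : mono r t) (v : 'rV[k]_r.+1) :
  mono_eval e v = mono_ev e v.
Proof. by []. Qed.

(** * Kronecker substitution *)

Lemma base_digits_inj B m (f g : 'I_m -> nat) :
  (forall i, f i < B)%N -> (forall i, g i < B)%N ->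
  (\sum_i f i * B ^ i = \sum_i g i * B ^ i)%N -> f =1 g.
Proof.
elim: m f g => [|m IHm] f g f_lt g_lt; first by move=> _ [].
have shift (h : 'I_m.+1 -> nat) : (\sum_(i < m) h (lift ord0 i) * B ^ bump 0 i =
    (\sum_(i < m) h (lift ord0 i) * B ^ i) * B)%N.
  by rewrite big_distrl; apply: eq_bigr => i _; rewrite expnS mulnCA mulnC.
rewrite !big_ord_recl /= !expn0 !muln1 !shift => eq_fg.
have eq0 : f ord0 = g ord0.
  have := congr1 (modn^~ B) eq_fg.
  by rewrite /= !(addnC (f ord0)) !(addnC (g ord0)) !modnMDl !modn_small.
move: eq_fg; rewrite eq0 => /eqP; rewrite eqn_add2l eqn_mul2r => /orP[/eqP B0|/eqP eq_fg].
  by move: (f_lt ord0); rewrite B0.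
move=> i; case: (unliftP ord0 i) => [j ->|-> //].
exact: IHm (fun j => f_lt _) (fun j => g_lt _) eq_fg j.
Qed.

Lemma poly_eq0_nonzero_roots (k : closedFieldType) (p : {poly k}) :
  (forall s, s != 0 -> p.[s] = 0) -> p = 0.
Proof.
move=> p_roots; apply/eqP; apply: contraT => p_neq0.
have /closed_nonrootP[s] : 'X * p != 0 by rewrite mulf_neq0 ?polyX_eq0.
rewrite /root hornerM hornerX mulf_eq0 negb_or => /andP[s_neq0].
by rewrite p_roots ?eqxx.
Qed.

(* Substituting x_i := s^(B^i) with t < B sends distinct monomials of degree
   t to distinct powers of s, so a form is determined by its values. *)
Section Kronecker.
Variables (k : closedFieldType) (r : nat).

Definition kron_exp B t (e : mono r t) : nat := (\sum_i val e i * B ^ i)%N.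

Lemma kron_exp_inj B t : (t < B)%N -> injective (@kron_exp B t).
Proof.
move=> tB e e' eq_ee'; apply/eq_mono/(base_digits_inj _ _ eq_ee') => i;
  by apply: leq_ltn_trans tB; rewrite -ltnS.
Qed.

Definition kron_point B (s : k) : 'rV[k]_r.+1 := \row_i s ^+ (B ^ i).

Lemma mono_ev_kron B t (e : mono r t) s : mono_ev e (kron_point B s) = s ^+ kron_exp B e.
Proof. by rewrite -prodrXr; apply: eq_bigr => i _; rewrite mxE -exprM mulnC. Qed.

Definition kron_poly B t (c : {ffun mono r t -> k}) : {poly k} :=
  \sum_(e : mono r t) c e *: 'X^(kron_exp B e).

Lemma horner_kron_poly B t (c : {ffun mono r t -> k}) s :
  (kron_poly B c).[s] = form_ev c (kron_point B s).
Proof.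
rewrite horner_sum; apply: eq_bigr => e _.
by rewrite hornerZ hornerXn mono_ev_kron.
Qed.

Lemma coef_kron_poly B t (c : {ffun mono r t -> k}) e :
  (t < B)%N -> (kron_poly B c)`_(kron_exp B e) = c e.
Proof.
move=> tB; rewrite coef_sum (bigD1 e) //= coefZ coefXn eqxx mulr1 big1 ?addr0 //.
move=> e' ne'; rewrite coefZ coefXn.
by case: eqP => [/(kron_exp_inj tB) eq_e|]; [rewrite eq_e eqxx in ne' | rewrite mulr0].
Qed.

Lemma kron_poly_eq0 B t (c : {ffun mono r t -> k}) : (t < B)%N -> kron_poly B c = 0 -> c = 0.
Proof.
by move=> tB c0; apply/ffunP => e; rewrite -(coef_kron_poly c e tB) c0 coef0 ffunE.
Qed.

Lemma form_ev_inj t (c c' : {ffun mono r t -> k}) :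
  (forall v, form_ev c v = form_ev c' v) -> c = c'.
Proof.
move=> eq_cc'; apply/eqP; rewrite -subr_eq0; apply/eqP.
apply: (@kron_poly_eq0 t.+1) => //; apply: poly_eq0_nonzero_roots => s _.
rewrite horner_kron_poly /form_ev -[RHS](subrr (form_ev c' (kron_point t.+1 s))).
rewrite -{1}eq_cc' /form_ev -sumrB; apply: eq_bigr => e _.
by rewrite !ffunE mulrBl.
Qed.

Lemma form_ev_mul_eq0 a b (g : {ffun mono r a -> k}) (h : {ffun mono r b -> k}) :
  (forall v, form_ev g v * form_ev h v = 0) -> g != 0 -> h = 0.
Proof.
move=> gh0 g_neq0; pose B := (a + b).+1.
have aB : (a < B)%N by rewrite ltnS leq_addr.
have bB : (b < B)%N by rewrite ltnS leq_addl.
have : kron_poly B g * kron_poly B h = 0.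
  by apply: poly_eq0_nonzero_roots => s _; rewrite hornerM !horner_kron_poly gh0.
move/eqP; rewrite mulf_eq0 => /orP[/eqP/(kron_poly_eq0 aB) g0|/eqP/(kron_poly_eq0 bB)//].
by rewrite g0 eqxx in g_neq0.
Qed.

Lemma coeffsE t (phi : 'rV[k]_r.+1 -> k) :
  formfun t phi -> forall v, phi v = form_ev (coeffs t phi) v.
Proof.
move=> [c phi_c]; apply: (epsilon_spec (inhabits [ffun _ => 0])
  (fun c : hform k r t => forall v, phi v = feval c v)).
by exists c.
Qed.

Lemma coeffs_eq t (phi : 'rV[k]_r.+1 -> k) (c : {ffun mono r t -> k}) :
  (forall v, phi v = form_ev c v) -> coeffs t phi = c.
Proof.
by move=> phi_c; apply: form_ev_inj => v; rewrite -phi_c -coeffsE //; exists c.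
Qed.

End Kronecker.

(** * Symmetric powers *)

Lemma det_trig_rank (R : comNzRingType) n (M : 'M[R]_n) (rho : 'I_n -> nat) :
  injective rho -> (forall i j, (rho i < rho j)%N -> M i j = 0) ->
  \det M = \prod_i M i i.
Proof.
move=> rho_inj M0; rewrite /determinant (bigD1 1%g) //= [X in _ + X]big1 ?addr0.
  by rewrite odd_perm1 expr0 mul1r; apply: eq_bigr => i _; rewrite perm1.
move=> s s_neq1; have [/forallP s_le|] := boolP [forall i, rho (s i) <= rho i]%N.
  suff fix_s i : rho (s i) = rho i.
    by case/eqP: s_neq1; apply/permP => i; rewrite perm1; apply/rho_inj/fix_s.
  apply/eqP; rewrite eqn_leq s_le leqNgt; apply/negP => lt_i.
  have : (\sum_i rho (s i) < \sum_i rho i)%N.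
    rewrite (bigD1 i) //= [X in (_ < X)%N](bigD1 i) //= -addSn.
    by rewrite leq_add // leq_sum // => j _; apply: s_le.
  by rewrite [X in (_ < X)%N](reindex_inj (@perm_inj _ s)) ltnn.
rewrite negb_forall => /existsP[i]; rewrite -ltnNge => lt_i.
by rewrite (bigD1 i) //= M0 // mul0r mulr0.
Qed.

Section TopCoefficient.
Variable R : comNzRingType.

Lemma top_coefM (p q : {poly R}) a b : (size p <= a.+1)%N -> (size q <= b.+1)%N ->
  (size (p * q)%R <= (a + b).+1)%N /\ (p * q)`_(a + b) = p`_a * q`_b.
Proof.
move=> p_a q_b; split; first by apply: leq_trans (size_polyMleq p q) _; lia.
have lt_a : (a < (a + b).+1)%N by lia.
rewrite coefM (bigD1 (Ordinal lt_a)) //= addKn big1 ?addr0 // => j.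
rewrite -val_eqE /= => ne_ja; case: (ltngtP j a) ne_ja => // [lt_ja|gt_ja] _.
  by rewrite [q`_ _]nth_default ?mulr0 //; apply: leq_trans q_b _; lia.
by rewrite nth_default ?mul0r //; apply: leq_trans p_a gt_ja.
Qed.

Lemma top_coef_prod (I : Type) (s : seq I) (p : I -> {poly R}) (w : I -> nat) :
  (forall i, size (p i) <= (w i).+1)%N ->
  (size (\prod_(i <- s) p i)%R <= (\sum_(i <- s) w i).+1)%N /\
  (\prod_(i <- s) p i)`_(\sum_(i <- s) w i) = \prod_(i <- s) (p i)`_(w i).
Proof.
move=> p_w; elim: s => [|x s [IHsize IHcoef]].
  by rewrite !big_nil size_poly1 coefC.
rewrite !big_cons; have [size_x coef_x] := top_coefM (p_w x) IHsize.
by rewrite coef_x IHcoef.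
Qed.

Lemma top_coefX (p : {poly R}) a e : (size p <= a.+1)%N ->
  (size (p ^+ e) <= (a * e).+1)%N /\ (p ^+ e)`_(a * e) = p`_a ^+ e.
Proof.
move=> p_a; elim: e => [|e [IHsize IHcoef]].
  by rewrite muln0 !expr0 size_poly1 coefC.
rewrite mulnS !exprS; have [size_e coef_e] := top_coefM p_a IHsize.
by rewrite coef_e IHcoef.
Qed.

End TopCoefficient.

(* [sympow A] is the matrix of F |-> F(v A) on forms of degree u acting on
   coefficient rows, so that [sympowM] reverses products. *)
Section SymmetricPower.
Variables (k : closedFieldType) (r u : nat).
Local Notation Q := #|{: mono r u}|.
Local Notation ev := (@enum_val (mono r u) {: mono r u}).

Lemma big_mono_enum (T : Type) (idx : T) (op : Monoid.com_law idx) (F : mono r u -> T) :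
  \big[op/idx]_(e : mono r u) F e = \big[op/idx]_(j < Q) F (ev j).
Proof. exact: reindex _ (onW_bij _ (enum_val_bij _)). Qed.

Lemma form_ev_enum (F : 'I_Q -> k) v :
  form_ev [ffun e => F (enum_rank e)] v = \sum_j F j * mono_ev (ev j) v.
Proof. by rewrite /form_ev big_mono_enum; apply: eq_bigr => j _; rewrite ffunE enum_valK. Qed.

Definition sympow (A : 'M[k]_r.+1) : 'M[k]_Q :=
  \matrix_(i, j) coeffs u (fun v => mono_ev (ev i) (v *m A)) (ev j).

Lemma sympowE A i v : mono_ev (ev i) (v *m A) = \sum_j sympow A i j * mono_ev (ev j) v.
Proof.
rewrite (coeffsE (formfun_mono_mul (ev i) A) v) /form_ev big_mono_enum.
by apply: eq_bigr => j _; rewrite mxE.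
Qed.

Lemma sympowP A (M : 'M[k]_Q) :
  (forall i v, mono_ev (ev i) (v *m A) = \sum_j M i j * mono_ev (ev j) v) -> sympow A = M.
Proof.
move=> AM; apply/matrixP => i j; rewrite mxE.
rewrite (@coeffs_eq _ _ _ _ [ffun e => M i (enum_rank e)]) ?ffunE ?enum_valK //.
by move=> v; rewrite AM form_ev_enum.
Qed.

Lemma sympowM A B : sympow (A *m B) = sympow B *m sympow A.
Proof.
apply: sympowP => i v; rewrite mulmxA sympowE.
under eq_bigr do rewrite sympowE mulr_sumr.
rewrite exchange_big /=; apply: eq_bigr => l _.
by rewrite mxE mulr_suml; apply: eq_bigr => j _; rewrite mulrA.
Qed.

Lemma sympow1 : sympow 1%:M = 1%:M.
Proof.
apply: sympowP => i v; rewrite mulmx1 (bigD1 i) //= mxE eqxx mul1r big1 ?addr0 //.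
by move=> j /negbTE ne_ji; rewrite mxE eq_sym ne_ji mul0r.
Qed.

Lemma sympowZ a A : sympow (a *: A) = a ^+ u *: sympow A.
Proof.
apply: sympowP => i v; rewrite -scalemxAr mono_evZ sympowE mulr_sumr.
by apply: eq_bigr => j _; rewrite !mxE mulrA.
Qed.

Lemma mono_perm_subproof (s : {perm 'I_r.+1}) (e : mono r u) :
  (\sum_i (val e (s i) : nat))%N = u.
Proof. by rewrite -[RHS](mono_sum e) [in RHS](reindex_inj (@perm_inj _ s)). Qed.

Definition mono_perm s e := mono_of (mono_perm_subproof s e).

Lemma mono_permE s e i : (val (mono_perm s e) i : nat) = val e (s i).
Proof. exact: mono_ofE. Qed.

Lemma mono_perm_inj s : injective (mono_perm s).
Proof.
move=> e e' eq_ee'; apply: eq_mono => i.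
have := congr1 (fun x : mono r u => (val x ((s^-1)%g i) : nat)) eq_ee'.
by rewrite /= !mono_permE permKV.
Qed.

Lemma mono_ev_perm s e (v : 'rV[k]_r.+1) :
  mono_ev e (v *m perm_mx s) = mono_ev (mono_perm s e) v.
Proof.
rewrite -[s]invgK -col_permE /mono_ev (reindex_inj (@perm_inj _ s)) /=.
by apply: eq_bigr => i _; rewrite mxE invgK permK mono_permE.
Qed.

Definition sympow_perm s : {perm 'I_Q} :=
  perm (inj_comp (@enum_rank_inj _) (inj_comp (@mono_perm_inj s) (@enum_val_inj _ _))).

Lemma sympow_perm_mx s : sympow (perm_mx s) = perm_mx (sympow_perm s).
Proof.
apply: sympowP => i v; rewrite mono_ev_perm (bigD1 (sympow_perm s i)) //= big1 ?addr0.
  by rewrite !mxE eqxx mul1r permE /= enum_rankK.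
by move=> j /negbTE ne_j; rewrite !mxE eq_sym ne_j mul0r.
Qed.

Definition mono_weight := (\sum_(e : mono r u) val e ord0)%N.

Lemma mono_weight_sym i : (\sum_(e : mono r u) val e i)%N = mono_weight.
Proof.
rewrite /mono_weight (reindex_inj (@mono_perm_inj (tperm ord0 i))) /=.
by apply: eq_bigr => e _; rewrite mono_permE tpermR.
Qed.

Definition upper_trig (U : 'M[k]_r.+1) := forall i j : 'I_r.+1, (j < i)%N -> U i j = 0.

Local Notation B := u.+2.

Definition kron_col (U : 'M[k]_r.+1) l : {poly k} := \sum_m U m l *: 'X^(B ^ m).

Lemma horner_kron_col U l s : (kron_col U l).[s] = (kron_point r B s *m U) ord0 l.
Proof.
rewrite horner_sum mxE; apply: eq_bigr => m _.
by rewrite hornerZ hornerXn mxE mulrC.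
Qed.

Lemma size_kron_col U l : upper_trig U -> (size (kron_col U l) <= (B ^ l).+1)%N.
Proof.
move=> U_trig; apply: leq_trans (size_sum _ _ _) _; apply/bigmax_leqP => m _.
have [le_ml|lt_lm] := leqP m l; last by rewrite U_trig // scale0r size_poly0.
apply: leq_trans (size_scale_leq _ _) _.
by rewrite size_polyXn ltnS leq_pexp2l.
Qed.

Lemma top_coef_kron_col U l : upper_trig U -> (kron_col U l)`_(B ^ l) = U l l.
Proof.
move=> U_trig; rewrite coef_sum (bigD1 l) //= coefZ coefXn eqxx mulr1 big1 ?addr0 //.
move=> m ne_ml; have /negbTE ne_ml' : (m : nat) != l by [].
by rewrite coefZ coefXn eqn_exp2l // eq_sym ne_ml' mulr0.
Qed.

Lemma kron_poly_sympow U i :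
  kron_poly B [ffun e => sympow U i (enum_rank e)] = \prod_l kron_col U l ^+ val (ev i) l.
Proof.
apply/eqP; rewrite -subr_eq0; apply/eqP; apply: poly_eq0_nonzero_roots => s _.
rewrite hornerD hornerN horner_kron_poly form_ev_enum -sympowE horner_prod.
by under [X in _ - X]eq_bigr do rewrite horner_exp horner_kron_col; rewrite subrr.
Qed.

Lemma sympow_upper_trig U : upper_trig U ->
  (forall i j, (kron_exp B (ev i) < kron_exp B (ev j))%N -> sympow U i j = 0) /\
  (forall i, sympow U i i = \prod_l U l l ^+ val (ev i) l).
Proof.
move=> U_trig.
have top i := @top_coef_prod _ _ (index_enum 'I_r.+1) (fun l => kron_col U l ^+ val (ev i) l)
   (fun l => B ^ l * val (ev i) l)%N (fun l => (top_coefX _ (size_kron_col l U_trig)).1).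
have kron_expE i :
    (\sum_(l <- index_enum 'I_r.+1) B ^ l * val (ev i) l)%N = kron_exp B (ev i).
  by apply: eq_bigr => l _; rewrite mulnC.
have sympow_coef i j :
    sympow U i j = (\prod_l kron_col U l ^+ val (ev i) l)`_(kron_exp B (ev j)).
  by rewrite -kron_poly_sympow coef_kron_poly ?ffunE ?enum_valK.
split=> [i j lt_ij|i]; rewrite sympow_coef.
  by rewrite nth_default //; apply: leq_trans lt_ij; rewrite -kron_expE (top i).1.
rewrite -kron_expE (top i).2; apply: eq_bigr => l _.
by rewrite (top_coefX _ (size_kron_col l U_trig)).2 top_coef_kron_col.
Qed.

Lemma det_sympow_upper_trig U :
  upper_trig U -> \det (sympow U) = (\prod_l U l l) ^+ mono_weight.
Proof.
move=> /sympow_upper_trig[sympow0 sympow_diag].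
rewrite (@det_trig_rank _ _ _ (fun i => kron_exp B (ev i))) //; last first.
  by move=> i j /kron_exp_inj eq_ij; apply/enum_val_inj/eq_ij.
under eq_bigr do rewrite sympow_diag.
rewrite exchange_big /= -prodrXl; apply: eq_bigr => l _.
by rewrite prodrXr -(mono_weight_sym l) big_mono_enum.
Qed.

Lemma det_sympow_lower_unitrig (L : 'M[k]_r.+1) :
  (forall i j : 'I_r.+1, (i <= j)%N -> L i j = (i == j)%:R) -> \det (sympow L) = 1.
Proof.
move=> L_unitrig; pose s : {perm 'I_r.+1} := perm (@rev_ord_inj r.+1).
pose U := perm_mx s *m L *m perm_mx (s^-1)%g.
have UE : U = col_perm s (row_perm s L) by rewrite col_permE row_permE.
have U_trig : upper_trig U.
  move=> i j lt_ji; rewrite UE !mxE !permE L_unitrig.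
    by rewrite (inj_eq rev_ord_inj) -val_eqE /= gtn_eqF.
  by rewrite /= leq_sub2l // ltnW.
have : \det (sympow U) = 1.
  rewrite det_sympow_upper_trig // big1 ?expr1n // => l _.
  by rewrite UE !mxE !permE L_unitrig // eqxx.
have det_ss : \det (sympow (perm_mx (s^-1)%g)) * \det (sympow (perm_mx s)) = 1.
  by rewrite -det_mulmx -sympowM -perm_mxM mulgV perm_mx1 sympow1 det1.
by rewrite /U !sympowM !det_mulmx mulrCA det_ss mulr1.
Qed.

(* Through an LUP decomposition: [det (sympow A)] is [det A ^+ mono_weight]
   up to the sign of a permutation. *)
Lemma det_sympow_SL A : \det A = 1 -> \det (sympow A) ^+ 2 = 1.
Proof.
move=> detA; have := cormen_lup_correct A; have := cormen_lup_perm A.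
have := @cormen_lup_lower _ _ A; have := @cormen_lup_upper _ _ A.
have := cormen_lup_detL A.
case: (cormen_lup A) => [[P L] U] /= detL U_trig L_unitrig /is_perm_mxP[s ->] PA.
have detU2 : \det U ^+ 2 = 1.
  move: (congr1 determinant PA); rewrite -!mulmxE !det_mulmx detL detA det_perm.
  by rewrite mul1r mulr1 => <-; rewrite sqrr_sign.
have detU : \det U = \prod_l U l l.
  rewrite -det_tr det_trig; first by apply: eq_bigr => l _; rewrite mxE.
  by apply/is_trig_mxP => i j lt_ij; rewrite mxE U_trig.
have detP2 : \det (sympow (perm_mx s)) ^+ 2 = 1.
  by rewrite sympow_perm_mx det_perm sqrr_sign.
have := congr1 (fun M => \det (sympow M) ^+ 2) PA.
rewrite /= -!mulmxE !sympowM !det_mulmx !exprMn detP2 mulr1.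
rewrite (det_sympow_lower_unitrig L_unitrig) expr1n mulr1 (det_sympow_upper_trig U_trig).
by rewrite -detU -exprM mulnC exprM detU2 expr1n => ->.
Qed.

End SymmetricPower.

(** * Weights of the Hilbert points *)

Lemma map_mx_horner_polyC (k : fieldType) m n (A : 'M[k]_(m, n)) s :
  map_mx (horner_eval s) (map_mx polyC A) = A.
Proof. by apply/matrixP => i j; rewrite !mxE /horner_eval hornerC. Qed.

Lemma sympow_map_horner (k : closedFieldType) r u (P : 'M[{poly k}]_r.+1) :
  exists C : 'M[{poly k}]_#|{: mono r u}|,
    forall s, sympow u (map_mx (horner_eval s) P) = map_mx (horner_eval s) C.
Proof.
have [C PC] := fin_all_exists (fun i : 'I_#|{: mono r u}| =>
  formfun_mono_mul (enum_val i) P).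
exists (\matrix_(i, j) C i (enum_val j)) => s; apply: sympowP => i v.
have := congr1 (horner_eval s) (PC i (map_mx polyC v)).
rewrite mono_ev_rmorph form_ev_rmorph map_mxM map_mx_horner_polyC => ->.
by rewrite /form_ev big_mono_enum; apply: eq_bigr => j _; rewrite !mxE ffunE.
Qed.

Lemma det_size1 (R : comNzRingType) n (n1 : n = 1%N) (M : 'M[R]_n) i : \det M = M i i.
Proof. by subst n; rewrite [M]mx11_scalar det_scalar1 !mxE !ord1. Qed.

Lemma int_threshold (P : int -> Prop) j (n : nat) :
  P j -> ~ P (j + n%:Z) -> exists i, P i /\ ~ P (i + 1).
Proof.
elim: n j => [|n IHn] j Pj Pjn; first by rewrite addr0 in Pjn.
have [Pj1|] := classic (P (j + 1)); last by exists j.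
by apply: (IHn (j + 1)) => //; rewrite -addrA -intS.
Qed.

Section LowestWeight.
Variables (k : closedFieldType) (r d : nat) (l : k -> 'M[k]_r.+1) (f : hform k r d).

Lemma ord_ge_le t i j : ord_ge t f l i -> j <= i -> ord_ge t f l j.
Proof.
move=> ord_i le_ji b; have [p pE] := ord_i b.
have iE : i = j + `|i - j|%N by rewrite gez0_abs ?subr_ge0 //; lia.
exists ('X^`|i - j|%N * p) => s s_neq0.
by rewrite pE // {1}iE exprzDr ?unitfE // hornerM hornerXn mulrA.
Qed.

Lemma mu_is_uniq t i j : mu_is t f l i -> mu_is t f l j -> i = j.
Proof.
move=> [ord_i ord_i1] [ord_j ord_j1]; case: (ltgtP i j) => // [lt_ij|lt_ji].
  by case: ord_i1; apply: ord_ge_le ord_j _; lia.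
by case: ord_j1; apply: ord_ge_le ord_i _; lia.
Qed.

End LowestWeight.

Section Weights.
Variables (k : closedFieldType) (r d t : nat).
Hypothesis le_dt : (d <= t)%N.
Local Notation u := (t - d)%N.
Local Notation Q := (Qdim r d t).
Local Notation ev := (@enum_val (mono r u) {: mono r u}).

Lemma mono_add_subproof (e : mono r d) (m : mono r u) : (\sum_i (val e i + val m i))%N = t.
Proof. by rewrite big_split /= !mono_sum subnKC. Qed.

Definition mono_add e m := mono_of (mono_add_subproof e m).

Lemma mono_ev_add (R : comNzRingType) e m (v : 'rV[R]_r.+1) :
  mono_ev (mono_add e m) v = mono_ev e v * mono_ev m v.
Proof. by rewrite mono_evM; apply: eq_bigr => i _; rewrite mono_ofE. Qed.

Definition mul_form (g : {ffun mono r d -> k}) (m : mono r u) : {ffun mono r t -> k} :=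
  [ffun e' => \sum_(e | mono_add e m == e') g e].

Lemma form_ev_mul_form g m v : form_ev (mul_form g m) v = form_ev g v * mono_ev m v.
Proof.
rewrite /form_ev mulr_suml.
under eq_bigr do rewrite ffunE mulr_suml.
rewrite (exchange_big_dep xpredT) //=; apply: eq_bigr => e _.
by rewrite (big_pred1 (mono_add e m)) ?mono_ev_add ?mulrA // => e'; rewrite /= eq_sym.
Qed.

Definition mul_form_mx g : 'M[k]_(Q, #|{: mono r t}|) :=
  \matrix_(i, j) mul_form g (ev i) (enum_val j).

Lemma row_free_mul_form (g : {ffun mono r d -> k}) : g != 0 -> row_free (mul_form_mx g).
Proof.
move=> g_neq0; apply: inj_row_free => w w0.
pose h : {ffun mono r u -> k} := [ffun m => w ord0 (enum_rank m)].
suff h0 : h = 0.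
  apply/rowP => j; have := congr1 (fun h : {ffun mono r u -> k} => h (ev j)) h0.
  by rewrite /= !ffunE enum_valK mxE.
apply: (form_ev_mul_eq0 _ g_neq0) => v.
rewrite form_ev_enum mulr_sumr.
under eq_bigr do rewrite mulrCA -form_ev_mul_form.
rewrite -form_ev_sum /form_ev big1 // => e _; rewrite ffunE.
have := congr1 (fun M : 'rV_#|{: mono r t}| => M ord0 (enum_rank e)) w0.
rewrite /= !mxE => sum0; rewrite -[RHS](mul0r (mono_ev e v)); congr (_ * _).
by rewrite -[RHS]sum0; apply: eq_bigr => j _; rewrite mxE enum_rankK.
Qed.

Variables (l : k -> 'M[k]_r.+1) (N : nat) (P : 'M[{poly k}]_r.+1).
Hypothesis lE : forall s, s != 0 -> l s = s ^- N *: map_mx (horner_eval s) P.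
Hypothesis det_l : forall s, s != 0 -> \det (l s) = 1.
Variable f : hform k r d.
Hypothesis f_neq0 : f != 0.

Definition act_f s : {ffun mono r d -> k} := coeffs d (fun v => feval f (v *m l s)).

Lemma act_fE s v : feval f (v *m l s) = form_ev (act_f s) v.
Proof. exact: coeffsE (formfun_form_mul f (l s)) v. Qed.

Lemma act_f_poly : exists C : {ffun mono r d -> {poly k}},
  forall s, s != 0 -> forall e, act_f s e = (s ^- N) ^+ d * (C e).[s].
Proof.
have [C PC] := formfun_form_mul [ffun e => (f e)%:P] P.
exists C => s s_neq0 e.
suff -> : act_f s = [ffun e => (s ^- N) ^+ d * (C e).[s]] by rewrite ffunE.
apply: coeffs_eq => v; rewrite fevalE (lE s_neq0) -scalemxAr form_evZ.
have := congr1 (horner_eval s) (PC (map_mx polyC v)).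
rewrite !form_ev_rmorph map_mxM map_mx_horner_polyC.
have -> : [ffun e => horner_eval s ([ffun e0 => (f e0)%:P] e)] = f.
  by apply/ffunP => e'; rewrite !ffunE /horner_eval hornerC.
move=> ->; rewrite /form_ev mulr_sumr; apply: eq_bigr => e' _.
by rewrite !ffunE mulrA.
Qed.

Lemma act_f1_neq0 : act_f 1 != 0.
Proof.
have [v fv] : exists v, form_ev f v != 0.
  apply: NNPP => no_v; case/negP: f_neq0; apply/eqP/form_ev_inj => v.
  by rewrite form_ev0; apply/eqP; apply: contraT => fv; exfalso; apply: no_v; exists v.
have l1_unit : l 1 \in unitmx by rewrite unitmxE det_l ?oner_neq0 ?unitr1.
apply: contraNneq fv => act0.
by rewrite -[v](mulmxKV l1_unit) -fevalE act_fE act0 form_ev0.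
Qed.

(* [s |-> det (sympow u (l s))] is [s^-(N u Q)] times a polynomial [p] with
   [p^2 = X^(2 N u Q)] by [det_sympow_SL], so [p = +-X^(N u Q)]. *)
Lemma det_sympow_l_const : exists2 c : k, c != 0 &
  forall s, s != 0 -> \det (sympow u (l s)) = c.
Proof.
have [C PC] := sympow_map_horner u P.
pose M := (N * (u * Q))%N; pose p := \det C.
have detE s : s != 0 -> \det (sympow u (l s)) = (s ^+ M)^-1 * p.[s].
  move=> s_neq0; rewrite (lE s_neq0) sympowZ detZ PC det_map_mx /horner_eval.
  by rewrite -exprM exprVn -exprM.
have p2 : p ^+ 2 = 'X^M ^+ 2.
  apply/eqP; rewrite -subr_eq0; apply/eqP; apply: poly_eq0_nonzero_roots => s s_neq0.
  have sM_neq0 : s ^+ M != 0 by rewrite expf_neq0.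
  have := det_sympow_SL u (det_l s_neq0); rewrite detE // exprMn => p2s.
  rewrite hornerD hornerN !horner_exp hornerX -[X in _ - X]mulr1 -p2s mulrA -exprMn.
  by rewrite mulrV ?unitfE // expr1n mul1r subrr.
move/eqP: p2; rewrite -subr_eq0 subr_sqr mulf_eq0 => /orP[|] /eqP pE.
  exists 1 => [|s s_neq0]; rewrite ?oner_neq0 // detE //.
  by move/eqP: pE; rewrite subr_eq0 => /eqP ->; rewrite hornerXn mulVf // expf_neq0.
exists (-1) => [|s s_neq0]; rewrite ?oppr_eq0 ?oner_neq0 // detE //.
move/eqP: pE; rewrite addr_eq0 => /eqP ->.
by rewrite hornerN hornerXn mulrN mulVf // expf_neq0.
Qed.

Lemma plucker_sympow s b : s != 0 -> plucker f l s b =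
  \det (sympow u (l s)) * \det (\matrix_(i, j) mul_form (act_f s) (ev i) (b j)).
Proof.
move=> s_neq0; rewrite /plucker -det_mulmx; congr (\det _); apply/matrixP => i j.
rewrite !mxE /hilb_entry.
rewrite (@coeffs_eq _ _ _ _
  [ffun e => \sum_i' sympow u (l s) i i' * mul_form (act_f s) (ev i') e]).
  by rewrite ffunE; apply: eq_bigr => i' _; rewrite !mxE.
move=> v; rewrite mono_evalE act_fE sympowE form_ev_sum mulr_sumr.
by apply: eq_bigr => i' _; rewrite form_ev_mul_form mulrCA.
Qed.

Definition act_f_ord_ge (i : int) := forall e, exists p : {poly k},
  forall s, s != 0 -> act_f s e = s ^ i * p.[s].

Lemma Qdim_dd : Qdim r d d = 1%N.
Proof. by rewrite /Qdim subnn card_mono0. Qed.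

Lemma plucker_level_d s (b : 'I_(Qdim r d d) -> mono r d) i : s != 0 ->
  plucker f l s b = act_f s (b i).
Proof.
move=> s_neq0; rewrite /plucker (det_size1 Qdim_dd _ i) mxE /hilb_entry.
rewrite (@coeffs_eq _ _ _ _ (act_f s)) // => v.
rewrite mono_evalE act_fE [mono_ev _ _]big1 ?mulr1 // => j _.
have : (val (enum_val i) j <= 0)%N by rewrite -[X in (_ <= X)%N](subnn d) -ltnS ltn_ord.
by rewrite leqn0 => /eqP ->.
Qed.

Lemma ord_ge_level_d i : ord_ge d f l i <-> act_f_ord_ge i.
Proof.
have i0 := cast_ord (esym Qdim_dd) ord0.
split=> [ord_i e|act_i b].
  have [p pE] := ord_i (fun=> e); exists p => s s_neq0.
  by rewrite -(plucker_level_d (fun=> e) i0 s_neq0) pE.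
by have [p pE] := act_i (b i0); exists p => s s_neq0; rewrite (plucker_level_d _ i0) // pE.
Qed.

Lemma act_f_ord_ge_threshold : exists i, act_f_ord_ge i /\ ~ act_f_ord_ge (i + 1).
Proof.
have [C CE] := act_f_poly.
have act_base : act_f_ord_ge (- (N * d)%N%:Z).
  by move=> e; exists (C e) => s s_neq0; rewrite CE // exprVn -exprM -exprnN.
have /existsP[e0 act_e0] : [exists e, act_f 1 e != 0].
  apply: contraR act_f1_neq0 => /existsPn act0.
  by apply/eqP/ffunP => e; rewrite ffunE; apply/eqP/negPn/act0.
have Ce0_neq0 : C e0 != 0.
  by apply: contraNneq act_e0 => Ce0; rewrite CE ?oner_neq0 // Ce0 horner0 mulr0.
apply: (@int_threshold _ _ (size (C e0)) act_base) => /(_ e0)[p pE].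
have Ce0E : C e0 = p * 'X^(size (C e0)).
  apply/eqP; rewrite -subr_eq0; apply/eqP; apply: poly_eq0_nonzero_roots => s s_neq0.
  have sNd_neq0 : s ^- (N * d) != 0 by rewrite invr_eq0 expf_neq0.
  rewrite hornerD hornerN hornerM hornerXn.
  have := pE s s_neq0; rewrite CE // exprzDr ?unitfE // exprVn -exprM -exprnN -mulrA.
  by move/(mulfI sNd_neq0) => ->; rewrite mulrC subrr.
have p_neq0 : p != 0 by apply: contraNneq Ce0_neq0 => p0; rewrite Ce0E p0 mul0r.
have := congr1 (fun q : {poly k} => size q) Ce0E; rewrite /= size_mulXn //.
move/eqP; rewrite -[X in X == _]addn0 eqn_add2l eq_sym size_poly_eq0.
by rewrite (negbTE p_neq0).
Qed.

Lemma mul_form_minor_neq0 (g : {ffun mono r d -> k}) : g != 0 ->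
  exists b : 'I_Q -> mono r t, \det (\matrix_(i, j) mul_form g (ev i) (b j)) != 0.
Proof.
move=> /row_free_mul_form g_free.
have g_full : row_full (mul_form_mx g)^T by rewrite /row_full mxrank_tr.
exists (fun j => enum_val (fullrankfun g_full j)).
have -> : \matrix_(i, j) mul_form g (ev i) (enum_val (fullrankfun g_full j)) =
    (rowsub (fullrankfun g_full) (mul_form_mx g)^T)^T.
  by apply/matrixP => i j; rewrite !mxE.
by rewrite det_tr -unitfE -unitmxE fullrowsub_unit.
Qed.

Definition mul_form_poly_mx (p : mono r d -> {poly k}) (b : 'I_Q -> mono r t) :
    'M[{poly k}]_Q :=
  \matrix_(i, j) \sum_(e | mono_add e (ev i) == b j) p e.

Lemma plucker_mul_form_poly_mx c i (p : mono r d -> {poly k}) b :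
  (forall s, s != 0 -> \det (sympow u (l s)) = c) ->
  (forall e s, s != 0 -> act_f s e = s ^ i * (p e).[s]) ->
  forall s, s != 0 -> plucker f l s b = s ^ (i * Q%:Z) * (c *: \det (mul_form_poly_mx p b)).[s].
Proof.
move=> detE actE s s_neq0; rewrite plucker_sympow // detE //.
have -> : \matrix_(i0, j) mul_form (act_f s) (ev i0) (b j) =
    s ^ i *: map_mx (horner_eval s) (mul_form_poly_mx p b).
  apply/matrixP => i0 j; rewrite !mxE ffunE /horner_eval horner_sum mulr_sumr.
  by apply: eq_bigr => e _; rewrite actE.
by rewrite detZ det_map_mx /horner_eval hornerZ -exprz_exp mulrCA.
Qed.

Lemma ord_ge_level_t i : act_f_ord_ge i -> ord_ge t f l (i * Q%:Z).
Proof.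
move=> /fin_all_exists[p actE] b; have [c _ detE] := det_sympow_l_const.
by exists (c *: \det (mul_form_poly_mx p b)) => s; apply: plucker_mul_form_poly_mx.
Qed.

Lemma lowest_weight_neq0 i (p : mono r d -> {poly k}) :
  (forall e s, s != 0 -> act_f s e = s ^ i * (p e).[s]) -> ~ act_f_ord_ge (i + 1) ->
  [ffun e => (p e).[0]] != 0.
Proof.
move=> actE act_i1; apply/negP => /eqP/ffunP p0; apply: act_i1 => e.
have /factor_theorem[q pE] : root (p e) 0 by apply/rootP; have := p0 e; rewrite !ffunE.
exists q => s s_neq0; rewrite actE // pE hornerM hornerXsubC subr0.
by rewrite exprzDr ?unitfE // expr1z -mulrA [s * _]mulrC.
Qed.

Lemma horner_mul_form_poly_mx (p : mono r d -> {poly k}) b s :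
  map_mx (horner_eval s) (mul_form_poly_mx p b) =
  \matrix_(i, j) mul_form [ffun e => (p e).[s]] (ev i) (b j).
Proof.
apply/matrixP => i j; rewrite !mxE ffunE /horner_eval horner_sum.
by apply: eq_bigr => e _; rewrite ffunE.
Qed.

Lemma not_ord_ge_level_t i : act_f_ord_ge i -> ~ act_f_ord_ge (i + 1) ->
  ~ ord_ge t f l (i * Q%:Z + 1).
Proof.
move=> /fin_all_exists[p actE] act_i1 ord_t; have [c c_neq0 detE] := det_sympow_l_const.
have [b] := mul_form_minor_neq0 (lowest_weight_neq0 actE act_i1).
have [q qE] := ord_t b; apply/negP; rewrite negbK.
have cdetE : c *: \det (mul_form_poly_mx p b) = 'X * q.
  apply/eqP; rewrite -subr_eq0; apply/eqP; apply: poly_eq0_nonzero_roots => s s_neq0.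
  have si_neq0 : s ^ (i * Q%:Z) != 0 by rewrite expfz_eq0 negb_and s_neq0 orbT.
  rewrite hornerD hornerN hornerM hornerX.
  have := qE s s_neq0; rewrite (plucker_mul_form_poly_mx b detE actE s_neq0).
  by rewrite exprzDr ?unitfE // expr1z -mulrA => /(mulfI si_neq0) ->; rewrite subrr.
have := congr1 (horner^~ 0) cdetE; rewrite /= hornerZ hornerM hornerX mul0r.
rewrite -horner_evalE -det_map_mx horner_mul_form_poly_mx.
by move/eqP; rewrite mulf_eq0 (negbTE c_neq0).
Qed.

Lemma mu_is_levels : exists i, mu_is d f l i /\ mu_is t f l (i * Q%:Z).
Proof.
have [i [act_i act_i1]] := act_f_ord_ge_threshold.
exists i; split; split.
- exact/ord_ge_level_d.
- by move/ord_ge_level_d.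
- exact: ord_ge_level_t.
- exact: not_ord_ge_level_t.
Qed.

End Weights.

(** * Hesselink strata *)

Lemma intR_mul_nat (z : int) (n : nat) : intR (z * n%:Z) = Rmult (intR z) (INR n).
Proof.
case: z => m; first by rewrite -PoszM /= -multE mult_INR.
rewrite NegzE mulNr -PoszM.
have -> : Rmult (intR (Negz m)) (INR n) = Ropp (INR (m.+1 * n)%N).
  by rewrite -multE mult_INR /=; ring.
by case: (m.+1 * n)%N => [|q] /=; rewrite ?Ropp_0.
Qed.

Section Levels.
Variables (k : closedFieldType) (r d D : nat) (nrm : (k -> 'M[k]_r.+1) -> R).
Variable f : hform k r d.
Hypothesis f_neq0 : f != 0.
Local Notation Q := (INR #|{: mono r D}|).

Lemma card_mono_INR_gt0 : Rlt R0 Q.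
Proof. by apply/lt_0_INR/ssrnat.ltP/card_mono_gt0. Qed.

Lemma Rmult_card_mono_div x : x = Rmult Q (Rdiv x Q).
Proof. by field; apply/Rgt_not_eq/card_mono_INR_gt0. Qed.

Lemma ratio_is_level l y : is_ops_SL l ->
  ratio_is nrm (d + D) f l (Rmult Q y) <-> ratio_is nrm d f l y.
Proof.
move=> [[[N [P lE]] _] det_l].
have [i [mu_d mu_t]] := mu_is_levels (leq_addr D d) lE det_l f_neq0.
have QdimE : Qdim r d (d + D) = #|{: mono r D}| by rewrite /Qdim addKn.
have Q_neq0 := Rgt_not_eq _ _ card_mono_INR_gt0.
split=> [[j [mu_j yE]]|[j [mu_j ->]]].
  exists i; split=> //; apply: (Rmult_eq_reg_l Q) => //.
  by rewrite yE (mu_is_uniq mu_j mu_t) intR_mul_nat QdimE /Rdiv; ring.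
exists (i * (Qdim r d (d + D))%:Z); split=> //.
by rewrite (mu_is_uniq mu_j mu_d) intR_mul_nat QdimE /Rdiv; ring.
Qed.

Lemma ratio_bound_level delta :
  (forall l x, is_ops_SL l -> indivisible l -> ratio_is nrm (d + D) f l x ->
     Rle x (Rmult Q delta)) <->
  (forall l x, is_ops_SL l -> indivisible l -> ratio_is nrm d f l x -> Rle x delta).
Proof.
split=> bound l x l_SL l_indiv.
  move/(ratio_is_level _ l_SL) => ratio_x.
  exact: Rmult_le_reg_l card_mono_INR_gt0 (bound l _ l_SL l_indiv ratio_x).
rewrite [x]Rmult_card_mono_div => /(ratio_is_level _ l_SL) ratio_x.
exact/Rmult_le_compat_l/(bound l _ l_SL l_indiv ratio_x)/pos_INR.
Qed.

Lemma stratum_level l0 delta :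
  stratum nrm (d + D) l0 (Rmult Q delta) f <-> stratum nrm d l0 delta f.
Proof.
rewrite /stratum ratio_bound_level.
split=> -[[l [l_SL [l_indiv [l_conj ratio_l]]]] bound]; split=> //; exists l;
  by rewrite (ratio_is_level _ l_SL) in ratio_l *.
Qed.

Lemma max_value_level delta :
  max_value nrm (d + D) f (Rmult Q delta) <-> max_value nrm d f delta.
Proof.
rewrite /max_value ratio_bound_level.
split=> -[[l [l_SL [l_indiv ratio_l]]] bound]; split=> //; exists l;
  by rewrite (ratio_is_level _ l_SL) in ratio_l *.
Qed.

Lemma unstable_level : unstable nrm (d + D) f <-> unstable nrm d f.
Proof.
split=> -[delta [delta_gt0 max_delta]].
  rewrite [delta]Rmult_card_mono_div max_value_level in max_delta.
  exists (Rdiv delta Q); split=> //.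
  exact/Rdiv_lt_0_compat/card_mono_INR_gt0.
exists (Rmult Q delta); rewrite max_value_level; split=> //.
exact/Rmult_lt_0_compat/delta_gt0/card_mono_INR_gt0.
Qed.

End Levels.

Theorem theorem1 (k : closedFieldType) (r d : nat)
    (nrm : (k -> 'M[k]_r.+1) -> R) :
  (0 < r)%N -> (0 < d)%N -> admissible_norm nrm ->
  (forall (D : nat) (a : 'I_r.+1 -> int),
     \sum_(i < r.+1) a i = 0 -> indivisible (diag_ops (k:=k) a) ->
     forall delta : R, Rlt R0 delta ->
     forall f : hform k r d, f != 0 ->
       (stratum nrm (d + D) (diag_ops (k:=k) a) (Rmult (INR #|{: mono r D}|) delta) f
        <-> stratum nrm d (diag_ops (k:=k) a) delta f))
  /\ (forall (D : nat) (f : hform k r d), f != 0 ->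
       (unstable nrm (d + D) f <-> unstable nrm d f)).
Proof.
(* [mu] is rescaled by [|M_D|] for every one-parameter subgroup. *)
move=> _ _ _; split=> [D a _ _ delta _ f f_neq0|D f f_neq0].
  exact: stratum_level.
exact: unstable_level.
Qed.
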